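(* Assume $|C|<m$ and let $\mathcal S_1=\{(w_1+uw_2,w_3)\in\mathcal R^m: w_1\in\Delta_A,\ w_2\in\Delta_B,\ w_3\in\Delta_C^c\}$. Put $\epsilon=2$ if $A\subseteq B$ and $\epsilon=1$ if $A\not\subseteq B$. Then $\mathscr C_{\mathcal S_1}$ is a linear code over $R$ with parameters $$\big(q^{|A|+|B|}(q^m-q^{|C|}),\ q^{m+|A|+|A\cup B|},\ \epsilon(q-1)q^{|A|+|B|-1}(q^m-q^{|C|})\big),$$ and its Lee weight distribution is: weight $0$ with frequency $1$; weight $(q-1)q^{|A|+|B|-1}(q^m-q^{|C|})$ with frequency $2(q^{|A\cup B|-|B|}-1)$; weight $2(q-1)q^{|A|+|B|-1}(q^m-q^{|C|})$ with frequency $q^{m+|A|+|A\cup B|}-2q^{m-|C|+|A\cup B|-|B|}+q^{m-|C|}$; weight $(q-1)q^{|A|+|B|-1}(2q^m-q^{|C|})$ with frequency $2(q^{|A\cup B|-|B|}-1)(q^{m-|C|}-1)$; weight $2(q-1)q^{m+|A|+|B|-1}$ with frequency $q^{m-|C|}-1$. Consequently $\mathscr C_{\mathcal S_1}$ is a $2$-weight code if $A\subseteq B$ and a $4$-weight code if $A\not\subseteq B$.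
   Context: Let $q$ be a prime power, $\mathbb F_q$ the field of order $q$, $m\ge 2$ an integer and $[m]=\{1,\dots,m\}$. For $v\in\mathbb F_q^m$, $\mathrm{supp}(v)=\{i:v_i\ne0\}$ and $wt_H$ is Hamming weight. For nonempty $P\subseteq[m]$, $\Delta_P=\{v\in\mathbb F_q^m:\mathrm{supp}(v)\subseteq P\}$, $\Delta_P^c=\mathbb F_q^m\setminus\Delta_P$, $\Delta_P^*=\Delta_P\setminus\{\mathbf 0\}$. $A,B,C$ denote nonempty subsets of $[m]$. Let $R=\mathbb F_q[u]/\langle u^2\rangle$ and $\mathcal R=R\times\mathbb F_q$; each element of $\mathcal R^m$ is uniquely $(d+ue,f)$ with $d,e,f\in\mathbb F_q^m$. Define $\langle(d_1+ue_1,f_1),(d_2+ue_2,f_2)\rangle=(d_1+ue_1)\cdot(d_2+ue_2)+u\,f_1\cdot f_2\in R$, where $x\cdot y=\sum_i x_iy_i$. For a nonempty $\mathcal D\subseteq\mathcal R^m$ listed in a fixed order, $\mathscr C_{\mathcal D}=\{(\langle r,s\rangle)_{s\in\mathcal D}: r\in\mathcal R^m\}\subseteq R^{|\mathcal D|}$, an $R$-submodule (linear code over $R$). The Gray map $\Phi:R^n\to\mathbb F_q^{2n}$ is $\Phi(d+ue)=(e,d+e)$ for $d,e\in\mathbb F_q^n$; the Lee weight is $wt_L(x)=wt_H(\Phi(x))$. A code over $R$ has parameters $(n,K,D)$ if it has length $n$, cardinality $K$ and minimum nonzero Lee weight $D$. A $t$-weight code has exactly $t$ distinct nonzero weights. If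 two listed weight values coincide, their frequencies are added. *)

From mathcomp Require Import all_boot all_algebra.
Set Implicit Arguments. Unset Strict Implicit. Unset Printing Implicit Defensive.
Import GRing.Theory.
Local Open Scope ring_scope.

Section Defs.
Variables (F : finFieldType) (m : nat).

Definition vec := {ffun 'I_m -> F}.

Definition dot (x y : vec) : F := \sum_(i < m) x i * y i.

Definition Delta (P : {set 'I_m}) : {set vec} :=
  [set v : vec | [forall i, (v i != 0) ==> (i \in P)]].

(* R = F[u]/<u^2>; the pair (d, e) represents d + u e *)
Definition Rel := (F * F)%type.
Definition addR (x y : Rel) : Rel := (x.1 + y.1, x.2 + y.2).
Definition mulR (x y : Rel) : Rel := (x.1 * y.1, x.1 * y.2 + x.2 * y.1).
Definition zeroR : Rel := (0, 0).

(* an element of calR^m = (R x F_q)^m is uniquely (d + u e, f), stored as ((d, e), f) *)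
Definition elt := ((vec * vec) * vec)%type.

(* <(d1+ue1,f1),(d2+ue2,f2)> = (d1+ue1).(d2+ue2) + u f1.f2 *)
Definition ip (r s : elt) : Rel :=
  (dot r.1.1 s.1.1,
   dot r.1.1 s.1.2 + dot r.1.2 s.1.1 + dot r.2 s.2).

(* codewords of length |D| indexed by the elements of D (entries outside D are 0);
   this is an order-independent encoding of words in R^{|D|} *)
Definition word := {ffun elt -> Rel}.

Definition codeword (D : {set elt}) (r : elt) : word :=
  [ffun s => if s \in D then ip r s else zeroR].

Definition code (D : {set elt}) : {set word} :=
  [set codeword D r | r : elt].

(* Lee weight of d + u e : Hamming weight of the Gray image (e, d + e) *)
Definition leeR (x : Rel) : nat := (x.2 != 0) + (x.1 + x.2 != 0).

Definition lee (D : {set elt}) (c : word) : nat := \sum_(s in D) leeR (c s).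

Definition zero_word : word := [ffun _ => zeroR].

Definition is_linear_code (D : {set elt}) (S : {set word}) : Prop :=
  [/\ zero_word \in S,
      forall c1 c2, c1 \in S -> c2 \in S -> [ffun s => addR (c1 s) (c2 s)] \in S &
      forall (a : Rel) c, c \in S -> [ffun s => if s \in D then mulR a (c s) else zeroR] \in S].

Definition min_lee (D : {set elt}) (S : {set word}) (d : nat) : Prop :=
  (exists2 c, c \in S & (c != zero_word) /\ lee D c = d) /\
  (forall c, c \in S -> c != zero_word -> (d <= lee D c)%N).

Definition freq (D : {set elt}) (S : {set word}) (w : nat) : nat :=
  #|[set c in S | lee D c == w]|.

Definition num_weights (D : {set elt}) (S : {set word}) : nat :=
  size (undup [seq lee D c | c <- enum S & c != zero_word]).

End Defs.

Definition S1 (F : finFieldType) (m : nat) (A B C : {set 'I_m}) : {set elt F m} :=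
  [set s : elt F m | [&& s.1.1 \in Delta F A, s.1.2 \in Delta F B & s.2 \notin Delta F C]].

(* A codeword is indexed by r = (d + u e, f), and along the Gray map its Lee weight splits
   into the numbers of s = (w1 + u w2, w3) in S1 at which the linear forms
   e.w1 + d.w2 + f.w3 and (d + e).w1 + d.w2 + f.w3 do not vanish.  On the product
   S1 = Delta_A x Delta_B x Delta_C^c such a form is nonzero on exactly a fraction (q-1)/q
   of the points as soon as its first coefficient is nonzero somewhere on A or its second
   somewhere on B, because translating along that axis shifts its value by any amount;
   otherwise only f matters, and the count is that of a linear form on the complement of
   Delta_C.  The weight of a codeword thus only depends on a few such incidence conditions.
   Reducing d to its coordinates in A u B and e to those in A changes no codeword and makes
   r |-> codeword injective when |C| < m, so the weight distribution follows by counting the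
   reduced r in each class. *)

From Pilot Require Import Defs.
From mathcomp Require Import all_boot all_algebra.
From mathcomp Require Import zify ring.
Set Implicit Arguments. Unset Strict Implicit. Unset Printing Implicit Defensive.
Import GRing.Theory.
Local Open Scope ring_scope.

Section Vectors.
Variables (F : finFieldType) (m : nat).
Local Notation vec := (vec F m).
Local Notation dot := (@dot F m).
Local Notation Delta := (Delta F).
Implicit Types (P : {set 'I_m}) (v w : vec).

Definition supp v : {set 'I_m} := [set i | v i != 0].

Definition touches P v := ~~ [disjoint supp v & P].

Definition delta_vec (i : 'I_m) (x : F) : vec := [ffun j => if j == i then x else 0].

Lemma suppP P v : reflect (forall i, i \notin P -> v i = 0) (supp v \subset P).
Proof.
apply: (iffP subsetP) => H i; first by apply: contraNeq => vi; apply: H; rewrite inE.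
by rewrite inE => vi; apply: contraR vi => /H ->; rewrite eqxx.
Qed.

Lemma in_Delta P v : (v \in Delta P) = (supp v \subset P).
Proof.
rewrite inE; apply/forallP/subsetP => H i; last by apply/implyP => vi; apply: H; rewrite inE.
by rewrite inE => /(implyP (H i)).
Qed.

Lemma supp_eq0 v : (supp v == set0) = (v == 0).
Proof.
apply/eqP/eqP => [v0 | ->]; last by apply/setP => i; rewrite !inE ffunE eqxx.
apply/ffunP => i; rewrite ffunE; apply/eqP; apply: contraT => vi.
have: i \in supp v by rewrite inE.
by rewrite v0 in_set0.
Qed.

Lemma touchesPn P v : reflect (forall i, i \in P -> v i = 0) (~~ touches P v).
Proof.
rewrite negbK; apply: (iffP pred0P) => H i.
  by move=> iP; have := H i; rewrite /= inE iP andbT => /negbT; rewrite negbK => /eqP.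
by rewrite /= inE; case: (boolP (i \in P)) => [/H ->|]; rewrite ?eqxx ?andbF.
Qed.

Lemma Delta_untouched P Q v : (v \in Delta P) && ~~ touches Q v = (v \in Delta (P :\: Q)).
Proof. by rewrite !in_Delta /touches negbK subsetD. Qed.

Lemma Delta_untouched_eq0 P v : (v \in Delta P) && ~~ touches P v = (v == 0).
Proof. by rewrite Delta_untouched setDv in_Delta subset0 supp_eq0. Qed.

Lemma card_Delta P : #|Delta P| = (#|F| ^ #|P|)%N.
Proof.
rewrite -(card_pffun_on (0 : F) P (predT : pred F)); apply: eq_card => v.
rewrite in_Delta; apply/idP/pffun_onP => [/subsetP vP | [/subsetP vP _]].
  by split=> //; apply/subsetP => i vi; apply: vP; rewrite inE.
by apply/subsetP => i; rewrite inE => vi; apply: vP.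
Qed.

Lemma Delta_delta_vec P i x : i \in P -> delta_vec i x \in Delta P.
Proof.
move=> iP; rewrite in_Delta; apply/suppP => j jP; rewrite ffunE.
by case: eqP => // ji; rewrite ji iP in jP.
Qed.

Lemma Delta0 P : 0 \in Delta P.
Proof. by rewrite in_Delta; apply/suppP => i _; rewrite ffunE. Qed.

Lemma DeltaD P v w : v \in Delta P -> w \in Delta P -> v + w \in Delta P.
Proof.
rewrite !in_Delta => /suppP vP /suppP wP; apply/suppP => i iP.
by rewrite ffunE vP ?wP ?addr0.
Qed.

Lemma DeltaN P v : v \in Delta P -> - v \in Delta P.
Proof. by rewrite !in_Delta => /suppP vP; apply/suppP => i iP; rewrite ffunE vP ?oppr0. Qed.

Lemma touches0 P : touches P 0 = false.
Proof.
rewrite /touches; have /eqP -> : supp 0 == set0 by rewrite supp_eq0.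
by rewrite disjoints_subset sub0set.
Qed.

Lemma delta_vecN i x : delta_vec i (- x) = - delta_vec i x.
Proof. by apply/ffunP => j; rewrite !ffunE; case: eqP; rewrite ?oppr0. Qed.

Lemma dotDl v v' w : dot (v + v') w = dot v w + dot v' w.
Proof. by rewrite /Defs.dot -big_split; apply: eq_bigr => i _; rewrite ffunE mulrDl. Qed.

Lemma dotDr v w w' : dot v (w + w') = dot v w + dot v w'.
Proof. by rewrite /Defs.dot -big_split; apply: eq_bigr => i _; rewrite ffunE mulrDr. Qed.

Lemma dotNl v w : dot (- v) w = - dot v w.
Proof. by rewrite /Defs.dot -sumrN; apply: eq_bigr => i _; rewrite ffunE mulNr. Qed.

Lemma dot_scalel k v w : dot [ffun i => k * v i] w = k * dot v w.
Proof. by rewrite /Defs.dot mulr_sumr; apply: eq_bigr => i _; rewrite ffunE mulrA. Qed.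

Lemma dot0l w : dot 0 w = 0.
Proof. by rewrite /Defs.dot big1 // => i _; rewrite ffunE mul0r. Qed.

Lemma dot0r v : dot v 0 = 0.
Proof. by rewrite /Defs.dot big1 // => i _; rewrite ffunE mulr0. Qed.

Lemma dot_delta_vecr v i x : dot v (delta_vec i x) = v i * x.
Proof.
rewrite /Defs.dot (bigD1 i) //= ffunE eqxx big1 ?addr0 // => j ji.
by rewrite ffunE (negbTE ji) mulr0.
Qed.

Lemma dot_disjoint v w : [disjoint supp v & supp w] -> dot v w = 0.
Proof.
move=> /pred0P vw; rewrite /Defs.dot big1 // => i _; have := vw i.
by rewrite /= !inE => /negbT; rewrite negb_and !negbK => /orP[] /eqP ->; rewrite ?mul0r ?mulr0.
Qed.

Lemma dot_Delta_untouched P v w : ~~ touches P v -> w \in Delta P -> dot v w = 0.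
Proof. by rewrite negbK in_Delta => vP wP; apply/dot_disjoint/(disjointWr wP). Qed.

Lemma dot_shift v w i t : v i != 0 -> dot v (w + delta_vec i (t / v i)) = dot v w + t.
Proof. by move=> vi; rewrite dotDr dot_delta_vecr mulrC divfK. Qed.

Lemma shiftK i x t :
  cancel (fun w : vec => w + delta_vec i (t / x)) (fun w => w + delta_vec i (- t / x)).
Proof. by move=> w; rewrite mulNr delta_vecN addrK. Qed.

Lemma notDelta_delta_vec P i x : i \notin P -> x != 0 -> delta_vec i x \in ~: Delta P.
Proof.
move=> iP x_neq0; rewrite in_setC in_Delta; apply: contra iP => /subsetP; apply.
by rewrite inE ffunE eqxx.
Qed.

Lemma dot_notDelta_eq0 P f :
  (exists j, j \notin P) -> {in ~: Delta P, forall w, dot f w = 0} -> f = 0.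
Proof.
move=> [j jP] f_orth; have Dj := notDelta_delta_vec jP (oner_neq0 F).
have fj : f j = 0 by have := f_orth _ Dj; rewrite dot_delta_vecr mulr1.
apply/ffunP => i; rewrite ffunE; case: (eqVneq i j) => [-> //| ij].
have Dji : delta_vec j 1 + delta_vec i 1 \in ~: Delta P.
  rewrite in_setC in_Delta; apply: contra jP => /subsetP; apply.
  by rewrite inE !ffunE eqxx [j == i]eq_sym (negbTE ij) addr0 oner_neq0.
by have := f_orth _ Dji; rewrite dotDr !dot_delta_vecr !mulr1 fj add0r.
Qed.
Lemma card_vec : #|{: vec}| = (#|F| ^ m)%N.
Proof. by rewrite card_ffun card_ord. Qed.

Lemma card_notDelta P : #|~: Delta P| = (#|F| ^ m - #|F| ^ #|P|)%N.
Proof. by rewrite -card_vec -(cardsC (Delta P)) card_Delta addKn. Qed.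

Lemma touches_setT v : touches [set: 'I_m] v = (v != 0).
Proof. by rewrite /touches disjoints_subset setCT subset0 supp_eq0. Qed.

Lemma Delta_setT : Delta [set: 'I_m] = [set: vec].
Proof. by apply/setP => v; rewrite in_Delta subsetT inE. Qed.

Lemma card_notDelta_dot_neq0 P (f : vec) :
  #|[set w in ~: Delta P | dot f w != 0]| =
  (#|[set w in Delta [set: 'I_m] | dot f w != 0%R]|
   - #|[set w in Delta P | dot f w != 0%R]|)%N.
Proof.
have -> : [set w in Delta [set: 'I_m] | dot f w != 0] = [set w | dot f w != 0].
  by apply/setP => w; rewrite Delta_setT !inE.
have -> : [set w in Delta P | dot f w != 0] = [set w | dot f w != 0] :&: Delta P.
  by apply/setP => w; rewrite !inE andbC.
rewrite -(cardsID (Delta P) [set w | dot f w != 0]) addKn.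
by apply: eq_card => w; rewrite !inE andbC.
Qed.

Definition restrict P v : vec := [ffun i => if i \in P then v i else 0].

Lemma restrict_Delta P v : restrict P v \in Delta P.
Proof. by rewrite in_Delta; apply/suppP => i iP; rewrite ffunE (negbTE iP). Qed.

Lemma dot_restrict P v w : w \in Delta P -> dot (restrict P v) w = dot v w.
Proof.
rewrite in_Delta => /suppP wP; apply: eq_bigr => i _; rewrite ffunE.
by case: ifPn => // iP; rewrite wP // !mulr0.
Qed.

Lemma Delta_subset P P' v : P \subset P' -> v \in Delta P -> v \in Delta P'.
Proof. by rewrite !in_Delta => PP' vP; apply: subset_trans PP'. Qed.
End Vectors.

Lemma card_setIdE (T : finType) (X : {set T}) (P : pred T) :
  #|[set x in X | P x]| = (\sum_(x in X) P x)%N.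
Proof.
rewrite -sum1_card big_mkcond [RHS]big_mkcond; apply: eq_bigr => x _.
by rewrite inE; case: (x \in X); case: (P x).
Qed.

Lemma sum_by_class (T I : finType) (X : {set T}) (k : T -> I) (G : I -> nat) :
  (\sum_(x in X) G (k x) = \sum_i #|[set x in X | k x == i]| * G i)%N.
Proof.
rewrite (partition_big k xpredT) //=; apply: eq_bigr => i _.
rewrite (eq_bigr (fun _ => G i)) => [|x /andP[_ /eqP ->] //].
by rewrite sum_nat_const; congr (_ * _)%N; apply: eq_card => x; rewrite inE.
Qed.

Lemma card_setX_class (T1 T2 I J : finType) (X1 : {set T1}) (X2 : {set T2})
    (k1 : T1 -> I) (k2 : T2 -> J) (P : I -> J -> bool) :
  #|[set x in setX X1 X2 | P (k1 x.1) (k2 x.2)]| =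
  (\sum_i \sum_j P i j * (#|[set x in X1 | k1 x == i]| * #|[set y in X2 | k2 y == j]|))%N.
Proof.
rewrite card_setIdE.
rewrite (eq_bigl (fun x => (x.1 \in X1) && (x.2 \in X2))) => [|[x1 x2]]; last by rewrite in_setX.
rewrite -(pair_big_dep (mem X1) (fun _ => mem X2) (fun x y => nat_of_bool (P (k1 x) (k2 y)))) /=.
rewrite (eq_bigr (fun x => \sum_j #|[set y in X2 | k2 y == j]| * P (k1 x) j)%N);
  last by move=> x _; exact: (sum_by_class X2 k2 (fun j => nat_of_bool (P (k1 x) j))).
rewrite (sum_by_class X1 k1 (fun i => \sum_j #|[set y in X2 | k2 y == j]| * P i j)%N).
apply: eq_bigr => i _; rewrite big_distrr /=; apply: eq_bigr => j _; ring.
Qed.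

Lemma sum_bool2 (G : bool * bool -> nat) :
  (\sum_i G i = G (false, false) + G (false, true) + G (true, false) + G (true, true))%N.
Proof.
rewrite (eq_bigr (fun i => G (i.1, i.2))); last by case.
by rewrite -(pair_big xpredT xpredT (fun a b => G (a, b))) /= !big_bool /=; ring.
Qed.

Lemma card_class_bool2 (T : finType) (X : {set T}) (k : T -> bool * bool) :
  let n i := #|[set x in X | k x == i]| in
  [/\ #|X| = (n (false, false) + n (false, true) + n (true, false) + n (true, true))%N,
      #|[set x in X | ~~ (k x).1]| = (n (false, false) + n (false, true))%N &
      #|[set x in X | ~~ (k x).2]| = (n (false, false) + n (true, false))%N].
Proof.
move=> n; have E (G : bool * bool -> nat) : (\sum_(x in X) G (k x) =
    n (false, false) * G (false, false) + n (false, true) * G (false, true)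
    + n (true, false) * G (true, false) + n (true, true) * G (true, true))%N.
  by rewrite sum_by_class sum_bool2.
split; first by rewrite -sum1_card (E (fun=> 1%N)) !muln1.
  by rewrite card_setIdE (E (fun i => nat_of_bool (~~ i.1))) /= !muln1 !muln0 !addn0.
by rewrite card_setIdE (E (fun i => nat_of_bool (~~ i.2))) /= !muln1 !muln0 !addn0.
Qed.

Section ShiftCount.
Variables (F : finFieldType) (T : finType) (S : {set T}) (phi : T -> F) (tau : F -> T -> T).
Hypotheses (tauS : forall t, {in S, forall s, tau t s \in S})
           (phi_tau : forall t s, phi (tau t s) = phi s + t)
           (tauK : forall t, cancel (tau t) (tau (- t))).

Lemma card_level_set t : #|[set s in S | phi s == t]| = #|[set s in S | phi s == 0]|.
Proof.
have tauKV : cancel (tau (- t)) (tau t) by move=> s; have := tauK (- t) s; rewrite opprK.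
have -> : [set s in S | phi s == t] = tau t @: [set s in S | phi s == 0].
  apply/setP => s; apply/idP/imsetP => [|[s' ]]; rewrite inE.
    move=> /andP[sS /eqP ps]; exists (tau (- t) s); last by rewrite tauKV.
    by rewrite inE tauS //= phi_tau ps subrr.
  by move=> /andP[s'S /eqP ps'] ->; rewrite inE tauS //= phi_tau ps' add0r.
exact/card_imset/(can_inj (tauK t)).
Qed.

Lemma card_shift_neq0 N :
  #|S| = (#|F| * N)%N -> #|[set s in S | phi s != 0]| = ((#|F| - 1) * N)%N.
Proof.
move=> SN; have q_gt0 : (0 < #|F|)%N by apply/card_gt0P; exists 0.
pose Z := [set s in S | phi s == 0].
have S_levels : #|S| = (#|F| * #|Z|)%N.
  rewrite -sum1_card (partition_big phi xpredT) //= (eq_bigr (fun _ => #|Z|)).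
    by rewrite sum_nat_const mulnC.
  by move=> t _; rewrite -(card_level_set t) -sum1_card; apply: eq_bigl => s; rewrite inE.
have Z_N : #|Z| = N by apply/eqP; rewrite -(eqn_pmul2l q_gt0) -S_levels SN.
have := cardsID [set s | phi s == 0] S; rewrite SN mulnBl mul1n => <-.
have -> : S :&: [set s | phi s == 0] = Z by apply/setP => s; rewrite !inE.
by rewrite Z_N addKn; apply: eq_card => s; rewrite !inE andbC.
Qed.
End ShiftCount.

Lemma card_Delta_dot_neq0 (F : finFieldType) (m : nat) (P : {set 'I_m}) (f : vec F m) :
  #|[set w in Delta F P | dot f w != 0]| =
  if touches P f then ((#|F| - 1) * #|F| ^ (#|P| - 1))%N else 0%N.
Proof.
case: ifPn => [/pred0Pn[i /andP[]] | untouched]; last first.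
  apply/eqP; rewrite cards_eq0; apply/eqP/setP => w; rewrite in_set in_set0.
  by apply/andP => -[wP]; rewrite (dot_Delta_untouched untouched wP) eqxx.
rewrite inE => fi iP; rewrite inE in fi.
apply: (card_shift_neq0 (phi := dot f) (tau := fun t w => w + delta_vec i (t / f i))).
- by move=> t w wP; rewrite DeltaD ?Delta_delta_vec.
- by move=> t w; rewrite dot_shift.
- by move=> t; apply: shiftK.
- have P_gt0 : (0 < #|P|)%N by apply/card_gt0P; exists i.
  by rewrite card_Delta -expnS subn1 prednK.
Qed.

Section Codes.
Variables (F : finFieldType) (m : nat).
Implicit Types (D : {set elt F m}) (S : {set word F m}).
Local Notation zero_word := (zero_word F m).

Lemma code_is_linear D : is_linear_code D (code D).
Proof.
split.
- apply/imsetP; exists (0, 0, 0) => //; apply/ffunP => s; rewrite !ffunE.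
  by case: ifP => // _; rewrite /ip !dot0l !addr0.
- move=> _ _ /imsetP[[[d1 e1] f1] _ ->] /imsetP[[[d2 e2] f2] _ ->].
  apply/imsetP; exists (d1 + d2, e1 + e2, f1 + f2) => //; apply/ffunP => s.
  rewrite !ffunE; case: ifP => _; last by rewrite /addR /zeroR /= addr0.
  by rewrite /addR /ip /= !dotDl; congr (_, _); ring.
- move=> [a1 a2] _ /imsetP[[[d e] f] _ ->].
  apply/imsetP; exists ([ffun i => a1 * d i], [ffun i => a1 * e i] + [ffun i => a2 * d i],
                         [ffun i => a1 * f i]) => //.
  apply/ffunP => s; rewrite !ffunE; case: (s \in D) => //.
  by rewrite /mulR /ip /= !dotDl !dot_scalel; congr (_, _); ring.
Qed.

(* The two Gray-map halves of [ip r s] are [(ip r s).2] and [(ip r s).1 + (ip r s).2]. *)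
Lemma lee_codeword D r :
  lee D (codeword D r) =
  (#|[set s in D | ((ip r s).2 != 0)%R]| + #|[set s in D | ((ip r s).1 + (ip r s).2 != 0)%R]|)%N.
Proof.
rewrite /lee (eq_bigr (fun s => leeR (ip r s))) => [|s sD]; last by rewrite ffunE sD.
by rewrite big_split /= !card_setIdE.
Qed.

Lemma ipB (r r' s : elt F m) : ip (r - r') s = ((ip r s).1 - (ip r' s).1, (ip r s).2 - (ip r' s).2).
Proof. by rewrite /ip /= !dotDl !dotNl; congr (_, _); ring. Qed.

Lemma leeR_eq0 (x : Rel F) : (leeR x == 0)%N = (x == zeroR F).
Proof.
case: x => x1 x2; rewrite /leeR /zeroR xpair_eqE /=.
case: (eqVneq x2 0) => [->|_]; last by rewrite andbF.
by rewrite addr0 andbT; case: (eqVneq x1 0).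
Qed.

Lemma lee_code_eq0 D : {in code D, forall c, (lee D c == 0)%N = (c == zero_word)}.
Proof.
move=> _ /imsetP[r _ ->]; rewrite /lee sum_nat_eq0.
apply/forall_inP/eqP => [c0 | -> s _]; last by rewrite ffunE leeR_eq0.
apply/ffunP => s; rewrite !ffunE; case: ifP => // sD.
by apply/eqP; rewrite -leeR_eq0; have := c0 s sD; rewrite ffunE sD.
Qed.

Definition nz_weights D S := [seq lee D c | c <- enum S & c != zero_word].

Lemma mem_nz_weights D S x :
  {in S, forall c, (lee D c == 0)%N = (c == zero_word)} ->
  (x \in nz_weights D S) = (x != 0)%N && (0 < freq D S x)%N.
Proof.
move=> lee_eq0; apply/mapP/andP => [[c] | [x_neq0 /card_gt0P[c]]].
  rewrite mem_filter mem_enum => /andP[c_neq0 cS] ->; split; first by rewrite lee_eq0.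
  by apply/card_gt0P; exists c; rewrite inE cS eqxx.
rewrite inE => /andP[cS /eqP lee_c]; exists c => //.
by rewrite mem_filter mem_enum cS andbT -lee_eq0 // lee_c.
Qed.

Lemma min_lee_nz_weights D S w :
  w \in nz_weights D S -> {in nz_weights D S, forall x, w <= x}%N -> min_lee D S w.
Proof.
move=> /mapP[c]; rewrite mem_filter mem_enum => /andP[c_neq0 cS] ->{w} c_min.
split; first by exists c.
by move=> c' c'S c'_neq0; apply: c_min; apply: map_f; rewrite mem_filter mem_enum c'_neq0.
Qed.

Lemma num_weights_nz_weights D S ws :
  nz_weights D S =i ws -> uniq ws -> num_weights D S = size ws.
Proof.
move=> nzwE ws_uniq; apply: perm_size; apply: uniq_perm => // [|x].
  exact: undup_uniq.
by rewrite mem_undup nzwE.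
Qed.
End Codes.

Lemma weight_profile (F : finFieldType) (m : nat) (D : {set elt F m}) (S : {set word F m})
    (W1 W2 W3 W4 f1 f2 f3 f4 : nat) :
  {in S, forall c, (lee D c == 0)%N = (c == zero_word F m)} ->
  (forall w, freq D S w =
     (w == 0) + (w == W1) * f1 + (w == W2) * f2 + (w == W3) * f3 + (w == W4) * f4)%N ->
  (0 < W1 < W2)%N -> (W2 < W3 < W4)%N -> (0 < f2)%N -> (0 < f4)%N ->
  (f1 == 0)%N = (f3 == 0)%N ->
  min_lee D S (if f1 == 0 then W2 else W1)%N /\
  num_weights D S = (if f1 == 0 then 2 else 4)%N.
Proof.
move=> lee_eq0 freqE /andP[W1_gt0 W12] /andP[W23 W34] f2_gt0 f4_gt0 f13.
have nzwE x : (x \in nz_weights D S) =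
    [|| (x == W1) && (0 < f1), x == W2, (x == W3) && (0 < f3) | x == W4]%N.
  rewrite mem_nz_weights // freqE.
  by case: (x =P 0%N); case: (x =P W1); case: (x =P W2); case: (x =P W3); case: (x =P W4);
    move=> /= *; lia.
case: (eqVneq f1 0%N) f13 => [f1_0 /esym/eqP f3_0 | f1_neq0 /esym/negbT f3_neq0] /=.
  have {}nzwE : nz_weights D S =i [:: W2; W4].
    by move=> x; rewrite nzwE f1_0 f3_0 !inE !ltnn !andbF.
  split; last by apply: (num_weights_nz_weights nzwE); rewrite /= inE andbT; lia.
  by apply: min_lee_nz_weights => [|x]; rewrite nzwE ?inE ?eqxx // => /orP[] /eqP ->; lia.
have {}nzwE : nz_weights D S =i [:: W1; W2; W3; W4].
  by move=> x; rewrite nzwE !lt0n f1_neq0 f3_neq0 !inE !andbT.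
split; last by apply: (num_weights_nz_weights nzwE); rewrite /= !inE !andbT; lia.
by apply: min_lee_nz_weights => [|x]; rewrite nzwE ?inE ?eqxx // => /or4P[] /eqP ->; lia.
Qed.

Lemma card_gt1_finField (F : finFieldType) : (1 < #|F|)%N.
Proof. by rewrite -cardsT; apply/card_gt1P; exists 0, 1; rewrite !inE eq_sym oner_neq0. Qed.

Section DefiningSet.
Variables (F : finFieldType) (m : nat) (A B C : {set 'I_m}).
Local Notation vec := (vec F m).
Local Notation elt := (elt F m).
Local Notation dot := (@dot F m).
Local Notation Delta := (Delta F).
Local Notation D := (S1 F A B C).
Local Notation q := #|F|.

Lemma S1E : D = setX (setX (Delta A) (Delta B)) (~: Delta C).
Proof. by apply/setP => -[[x y] z]; rewrite inE !in_setX in_setC /= andbA. Qed.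

Lemma card_S1 : #|D| = (q ^ (#|A| + #|B|) * (q ^ m - q ^ #|C|))%N.
Proof. by rewrite S1E !cardsX card_notDelta !card_Delta expnD. Qed.

Definition form (al be f : vec) (s : elt) := dot al s.1.1 + dot be s.1.2 + dot f s.2.

Definition nz_form al be f := #|[set s in D | form al be f s != 0]|.

Lemma lee_codeword_S1 d e f :
  lee D (codeword D (d, e, f)) = (nz_form e d f + nz_form (d + e)%R d f)%N.
Proof.
rewrite lee_codeword; congr (_ + _)%N; apply: eq_card => s; rewrite !inE /form /=.
  by rewrite [dot d _ + _]addrC.
by rewrite dotDl; congr (_ && (_ != _)); ring.
Qed.

Definition wt1 := ((q - 1) * q ^ (#|A| + #|B| - 1) * (q ^ m - q ^ #|C|))%N.
Definition wt_half := ((q - 1) * q ^ (m + #|A| + #|B| - 1))%N.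

Lemma nz_form_touching al be f : touches A al || touches B be -> nz_form al be f = wt1.
Proof.
have card_S1_split i : i \in A :|: B ->
    #|D| = (q * (q ^ (#|A| + #|B| - 1) * (q ^ m - q ^ #|C|)))%N.
  move=> iAB; have AB_gt0 : (0 < #|A| + #|B|)%N.
    rewrite addn_gt0; case/setUP: iAB => iP; apply/orP; [left | right];
    by apply/card_gt0P; exists i.
  by rewrite card_S1 mulnA -expnS subn1 prednK.
rewrite /wt1 -mulnA; case/orP => /pred0Pn[i /andP[/[!inE] touch_i iP]].
- apply: (card_shift_neq0 (phi := form al be f)
            (tau := fun t s => (s.1.1 + delta_vec i (t / al i), s.1.2, s.2))).
  + move=> t [[w1 w2] w3]; rewrite S1E !in_setX /= => /andP[/andP[w1A ->] ->].
    by rewrite DeltaD ?Delta_delta_vec.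
  + by move=> t s; rewrite /form /= dot_shift //; ring.
  + by move=> t [[w1 w2] w3] /=; rewrite shiftK.
  + by apply: (card_S1_split i); apply/setUP; left.
- apply: (card_shift_neq0 (phi := form al be f)
            (tau := fun t s => (s.1.1, s.1.2 + delta_vec i (t / be i), s.2))).
  + move=> t [[w1 w2] w3]; rewrite S1E !in_setX /= => /andP[/andP[-> w2B] ->].
    by rewrite DeltaD ?Delta_delta_vec.
  + by move=> t s; rewrite /form /= dot_shift //; ring.
  + by move=> t [[w1 w2] w3] /=; rewrite shiftK.
  + by apply: (card_S1_split i); apply/setUP; right.
Qed.

Lemma nz_form_untouched al be f : ~~ touches A al -> ~~ touches B be ->
  nz_form al be f = (q ^ (#|A| + #|B|) * #|[set w in ~: Delta C | dot f w != 0%R]|)%N.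
Proof.
move=> untouched_A untouched_B.
rewrite /nz_form S1E expnD -!card_Delta -!cardsX; apply: eq_card => -[[w1 w2] w3].
rewrite [LHS]in_set [RHS]in_set !in_setX /form /= [w3 \in [set _ in _ | _]]in_set -!andbA.
case: (boolP (w1 \in Delta A)) => //= w1A; case: (boolP (w2 \in Delta B)) => //= w2B.
by rewrite (dot_Delta_untouched untouched_A w1A) (dot_Delta_untouched untouched_B w2B) !add0r.
Qed.

Definition f_class (f : vec) := (f != 0, touches C f).

Definition half_weight (g : bool) (k : bool * bool) :=
  if g then wt1 else if k.1 then (if k.2 then wt1 else wt_half) else 0%N.

Lemma nz_form_S1 al be f : A != set0 ->
  nz_form al be f = half_weight (touches A al || touches B be) (f_class f).
Proof.
move=> A_neq0; rewrite /half_weight /f_class /=.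
case: ifPn => [|/norP[untouched_A untouched_B]]; first exact: nz_form_touching.
rewrite nz_form_untouched // card_notDelta_dot_neq0 !card_Delta_dot_neq0.
rewrite touches_setT cardsT card_ord; case: (eqVneq f 0) => [_|/eqP f_neq0] /=.
  by rewrite sub0n muln0.
have expS n : (0 < n)%N -> (q ^ n = q * q ^ (n - 1))%N by move=> n_gt0; rewrite -expnS subn1 prednK.
have m_gt0 : (0 < m)%N.
  case: (posnP m) => // m0; case: f_neq0; apply/ffunP => i.
  by have := ltn_ord i; rewrite {2}m0.
have AB_gt0 : (0 < #|A| + #|B|)%N by rewrite addn_gt0 card_gt0 A_neq0.
rewrite [(q ^ (_ + _))%N]expS //; case: ifPn => [touch_C | _]; last first.
  rewrite subn0 /wt_half.
  have -> : (m + #|A| + #|B| - 1 = (m - 1) + 1 + (#|A| + #|B| - 1))%N by lia.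
  by rewrite !expnD expn1; ring.
have C_gt0 : (0 < #|C|)%N.
  by case/pred0Pn: touch_C => i /andP[_ iC]; apply/card_gt0P; exists i.
by rewrite /wt1 -mulnBr (expS m) // (expS #|C|) // -mulnBr; ring.
Qed.

Definition de_class (de : vec * vec) :=
  (touches A de.2 || touches B de.1, touches A (de.1 + de.2) || touches B de.1).

Definition class_weight (i k : bool * bool) := (half_weight i.1 k + half_weight i.2 k)%N.

Lemma lee_codeword_class r : A != set0 ->
  lee D (codeword D r) = class_weight (de_class r.1) (f_class r.2).
Proof. by case: r => [[d e] f] A_neq0; rewrite lee_codeword_S1 !nz_form_S1. Qed.

Local Notation normal_de := (setX (Delta (A :|: B)) (Delta A)).

Local Notation normal_elts := (setX normal_de [set: vec]).

(* Only the coordinates of [d] in [A :|: B] and of [e] in [A] are seen by [D]. *)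
Lemma code_S1E : code D = codeword D @: normal_elts.
Proof.
apply/setP => c; apply/imsetP/imsetP => -[r rN ->]; last by exists r.
exists (restrict (A :|: B) r.1.1, restrict A r.1.2, r.2).
  by rewrite !in_setX !restrict_Delta in_setT.
apply/ffunP => -[[w1 w2] w3]; rewrite !ffunE; case: ifP => // sD.
move: sD; rewrite S1E !in_setX => /andP[/andP[w1A w2B] _].
have w1AB := Delta_subset (subsetUl A B) w1A; have w2AB := Delta_subset (subsetUr A B) w2B.
by rewrite /ip /= !dot_restrict.
Qed.

Lemma orth_S1_eq0 r : (#|C| < m)%N -> r \in normal_elts ->
  {in D, forall s, ip r s = zeroR F} -> r = 0.
Proof.
case: r => [[d e] f] C_lt_m; rewrite !in_setX => /andP[/andP[dAB eA] _] r_orth.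
have /card_gt0P[j] : (0 < #|~: C|)%N by move: (cardsC C); rewrite card_ord; lia.
rewrite in_setC => jC; have Dj := notDelta_delta_vec jC (oner_neq0 F).
have f0 : f = 0.
  apply: (dot_notDelta_eq0 (ex_intro _ j jC)) => w wC.
  have := r_orth (0, 0, w); rewrite S1E !in_setX !Delta0 wC => /(_ isT) /(congr1 snd).
  by rewrite /ip /= !dot0r !add0r.
subst f; have test_point w1 w2 : w1 \in Delta A -> w2 \in Delta B ->
    (dot d w1, dot d w2 + dot e w1) = (0, 0).
  move=> w1A w2B; have := r_orth (w1, w2, delta_vec j 1).
  by rewrite S1E !in_setX w1A w2B Dj /ip /= dot0l addr0 => ->.
have dB i : i \in B -> d i = 0.
  move=> iB; have [_] := test_point _ _ (Delta0 F A) (Delta_delta_vec (1 : F) iB).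
  by rewrite dot0r addr0 dot_delta_vecr mulr1.
have deA i : i \in A -> d i = 0 /\ e i = 0.
  move=> iA; have [] := test_point _ _ (Delta_delta_vec (1 : F) iA) (Delta0 F B).
  by rewrite dot0r add0r !dot_delta_vecr !mulr1.
congr (_, _, _); apply/ffunP => i; rewrite ffunE.
  case: (boolP (i \in A)) => [/deA[] // | iA]; case: (boolP (i \in B)) => [/dB // | iB].
  by move: dAB; rewrite in_Delta => /suppP; apply; rewrite !inE negb_or iA.
case: (boolP (i \in A)) => [/deA[] // | iA].
by move: eA; rewrite in_Delta => /suppP; apply.
Qed.

Lemma codeword_S1_inj : (#|C| < m)%N -> {in normal_elts &, injective (codeword D)}.
Proof.
move=> C_lt_m [[d e] f] [[d' e'] f']; rewrite !in_setX !in_setT !andbT.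
move=> /andP[dAB eA] /andP[d'AB e'A] eq_rr'; apply/eqP; rewrite -subr_eq0.
apply/eqP/orth_S1_eq0 => //.
  change ((d - d', e - e', f - f') \in normal_elts).
  by rewrite !in_setX in_setT andbT !DeltaD ?DeltaN.
move=> s sD; have := congr1 (fun c : word F m => c s) eq_rr'.
by rewrite !ffunE sD ipB => ->; rewrite !subrr.
Qed.

Lemma card_code_S1 : (#|C| < m)%N -> #|code D| = (q ^ (m + #|A| + #|A :|: B|))%N.
Proof.
move=> C_lt_m; rewrite code_S1E card_in_imset; last exact: codeword_S1_inj.
by rewrite !cardsX cardsT card_vec !card_Delta -!expnD; congr (_ ^ _)%N; lia.
Qed.

Lemma freq_S1_classes w : A != set0 -> (#|C| < m)%N ->
  freq D (code D) w =
  (\sum_i \sum_k (class_weight i k == w) *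
     (#|[set de in normal_de | de_class de == i]| * #|[set f in [set: vec] | f_class f == k]|))%N.
Proof.
move=> A_neq0 C_lt_m; rewrite -card_setX_class /freq code_S1E.
have -> : [set c in codeword D @: normal_elts | lee D c == w] =
          codeword D @: [set r in normal_elts | lee D (codeword D r) == w].
  apply/setP => c; apply/idP/imsetP => [|[r]].
    by move=> /setIdP[/imsetP[r rN ->] lee_r]; exists r => //; apply/setIdP.
  by move=> /setIdP[rN lee_r] ->; apply/setIdP; split => //; apply: imset_f.
rewrite card_in_imset => [|r r' /setIdP[rN _] /setIdP[r'N _]]; last exact: codeword_S1_inj.
by apply: eq_card => r; rewrite [LHS]in_set [RHS]in_set lee_codeword_class.
Qed.

Lemma card_Delta_setUD : #|Delta ((A :|: B) :\: B)| = (q ^ (#|A :|: B| - #|B|))%N.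
Proof. by rewrite card_Delta cardsDS // subsetUr. Qed.

Lemma card_de_class_fst_false :
  #|[set de in normal_de | ~~ (de_class de).1]| = (q ^ (#|A :|: B| - #|B|))%N.
Proof.
rewrite -card_Delta_setUD -[RHS]muln1 -(cards1 (0 : vec)) -cardsX; apply: eq_card => -[d e].
rewrite [LHS]in_set !in_setX in_set1 /de_class /= negb_or.
rewrite -(Delta_untouched _ B d) -(Delta_untouched_eq0 A e).
by case: (d \in _); case: (e \in _); case: (touches A e); case: (touches B d).
Qed.

Lemma card_de_class_snd_false :
  #|[set de in normal_de | ~~ (de_class de).2]| = (q ^ (#|A :|: B| - #|B|))%N.
Proof.
rewrite -card_Delta_setUD.
have -> : [set de in normal_de | ~~ (de_class de).2] =
          (fun d => (d, - restrict A d)) @: Delta ((A :|: B) :\: B).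
  apply/setP => -[d e]; rewrite [LHS]in_set in_setX /de_class /= negb_or.
  apply/idP/imsetP => [/andP[/andP[dAB eA] /andP[/touchesPn de_A d_B]] | [d' d'AB [-> ->]]].
    exists d; first by rewrite -Delta_untouched dAB.
    congr (_, _); apply/ffunP => i; rewrite !ffunE; case: ifPn => iA.
      by apply/eqP; rewrite -addr_eq0 addrC; have := de_A i iA; rewrite ffunE => ->.
    by move: eA; rewrite oppr0 in_Delta => /suppP; apply.
  move: d'AB; rewrite -Delta_untouched => /andP[d'AB d'_B].
  rewrite d'AB d'_B DeltaN ?restrict_Delta // andbT /=.
  by rewrite andbT; apply/touchesPn => i iA; rewrite !ffunE iA subrr.
by apply: card_imset => d d' [].
Qed.

Lemma card_de_class_FF : #|[set de in normal_de | de_class de == (false, false)]| = 1%N.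
Proof.
rewrite -(cards1 ((0, 0) : vec * vec)); apply: eq_card => -[d e].
rewrite [LHS]in_set in_setX in_set1 /de_class /= !xpair_eqE /= !eqbF_neg !negb_or.
apply/idP/andP => [|[/eqP -> /eqP ->]]; last by rewrite !Delta0 addr0 !touches0.
move=> /and4P[/andP[dAB eA] /andP[e_A /touchesPn d_B] /touchesPn de_A _].
have e0 : e == 0 by rewrite -(Delta_untouched_eq0 A) eA e_A.
split => //; rewrite (eqP e0) in de_A; apply/eqP/ffunP => i; rewrite ffunE.
case: (boolP (i \in A)) => [iA | iA]; first by have := de_A i iA; rewrite addr0.
case: (boolP (i \in B)) => [/d_B // | iB].
by move: dAB; rewrite in_Delta => /suppP; apply; rewrite inE negb_or iA.
Qed.

Lemma card_f_class_FF : #|[set f in [set: vec] | f_class f == (false, false)]| = 1%N.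
Proof.
rewrite -(cards1 (0 : vec)); apply: eq_card => f; rewrite [LHS]in_set in_set1 /f_class.
by rewrite xpair_eqE in_setT; case: (eqVneq f 0) => [->|]; rewrite ?touches0.
Qed.

Lemma card_f_class_FT : #|[set f in [set: vec] | f_class f == (false, true)]| = 0%N.
Proof.
apply/eqP; rewrite cards_eq0; apply/eqP/setP => f; rewrite [LHS]in_set in_set0 /f_class.
by rewrite xpair_eqE in_setT; case: (eqVneq f 0) => [->|]; rewrite ?touches0.
Qed.

Lemma card_f_class_snd_false :
  #|[set f in [set: vec] | ~~ (f_class f).2]| = (q ^ (m - #|C|))%N.
Proof.
have -> : (m - #|C| = #|[set: 'I_m] :\: C|)%N by rewrite cardsDS ?subsetT // cardsT card_ord.
rewrite -card_Delta; apply: eq_card => f.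
by rewrite [LHS]in_set -Delta_untouched Delta_setT in_setT.
Qed.

Definition wt2 := (2 * (q - 1) * q ^ (#|A| + #|B| - 1) * (q ^ m - q ^ #|C|))%N.
Definition wt3 := ((q - 1) * q ^ (#|A| + #|B| - 1) * (2 * q ^ m - q ^ #|C|))%N.
Definition wt4 := (2 * (q - 1) * q ^ (m + #|A| + #|B| - 1))%N.

Lemma wt1_double : (wt1 + wt1)%N = wt2.
Proof. by rewrite /wt1 /wt2 addnn -mul2n !mulnA. Qed.

Lemma wt_half_double : (wt_half + wt_half)%N = wt4.
Proof. by rewrite /wt_half /wt4 addnn -mul2n !mulnA. Qed.

Lemma wt1_wt_half : A != set0 -> (#|C| <= m)%N -> (wt1 + wt_half)%N = wt3.
Proof.
move=> A_neq0 C_le_m; have A_gt0 : (0 < #|A|)%N by rewrite card_gt0.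
rewrite /wt1 /wt_half /wt3.
have -> : (2 * q ^ m - q ^ #|C| = (q ^ m - q ^ #|C|) + q ^ m)%N.
  have : (q ^ #|C| <= q ^ m)%N by rewrite leq_pexp2l // ltnW // card_gt1_finField.
  lia.
have -> : (m + #|A| + #|B| - 1 = (#|A| + #|B| - 1) + m)%N by lia.
by rewrite expnD; ring.
Qed.

Definition fr1 := (2 * (q ^ (#|A :|: B| - #|B|) - 1))%N.
Definition fr2 := (q ^ (m + #|A| + #|A :|: B|) + q ^ (m - #|C|)
                   - 2 * q ^ (m - #|C| + #|A :|: B| - #|B|))%N.
Definition fr3 := (2 * (q ^ (#|A :|: B| - #|B|) - 1) * (q ^ (m - #|C|) - 1))%N.
Definition fr4 := (q ^ (m - #|C|) - 1)%N.

Lemma freq_S1 w : A != set0 -> (#|C| < m)%N ->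
  freq D (code D) w =
  ((w == 0) + (w == wt1) * fr1 + (w == wt2) * fr2 + (w == wt3) * fr3 + (w == wt4) * fr4)%N.
Proof.
move=> A_neq0 C_lt_m.
have [n_all n_fst n_snd] := card_class_bool2 normal_de de_class.
have [f_all _ f_snd] := card_class_bool2 [set: vec] f_class.
rewrite card_de_class_fst_false card_de_class_FF in n_fst.
rewrite card_de_class_snd_false card_de_class_FF in n_snd.
rewrite card_f_class_snd_false card_f_class_FF in f_snd.
rewrite cardsX !card_Delta card_de_class_FF in n_all.
rewrite cardsT card_vec card_f_class_FF card_f_class_FT in f_all.
rewrite freq_S1_classes // !sum_bool2 /class_weight /half_weight /=.
rewrite card_de_class_FF card_f_class_FF card_f_class_FT.
set u := #|[set de in _ | _ == (false, true)]| in n_fst n_all *.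
set u' := #|[set de in _ | _ == (true, false)]| in n_snd n_all *.
set t := #|[set de in _ | _ == (true, true)]| in n_all *.
set y := #|[set f in _ | _ == (true, false)]| in f_snd f_all *.
set z := #|[set f in _ | _ == (true, true)]| in f_all *.
have u'_u : u' = u by apply/eqP; rewrite -(eqn_add2l 1) -n_snd -n_fst.
rewrite u'_u in n_all *.
have ab_ge_b : (#|B| <= #|A :|: B|)%N by rewrite subset_leq_card // subsetUr.
have fr2E : fr2 = (t * (1 + y + z) + 2 * u * z + z)%N.
  rewrite /fr2; have -> : (m + #|A| + #|A :|: B| = m + (#|A :|: B| + #|A|))%N by lia.
  have -> : (m - #|C| + #|A :|: B| - #|B| = (m - #|C|) + (#|A :|: B| - #|B|))%N by lia.
  rewrite !expnD n_all f_all f_snd n_fst.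
  have -> : ((1 + 0 + y + z) * (1 + u + u + t) + (1 + y) =
             (t * (1 + y + z) + 2 * u * z + z) + 2 * ((1 + y) * (1 + u)))%N by ring.
  by rewrite addnK.
rewrite /fr1 /fr3 /fr4 fr2E n_fst f_snd !addKn.
rewrite !add0n !addn0 wt1_double wt_half_double [(wt_half + _)%N]addnC wt1_wt_half 1?ltnW //.
rewrite !(eq_sym _ w); ring.
Qed.

Lemma wt_increasing : A != set0 -> (#|C| < m)%N -> (0 < wt1 < wt2)%N && (wt2 < wt3 < wt4)%N.
Proof.
move=> A_neq0 C_lt_m; have q_gt1 := card_gt1_finField F.
have A_gt0 : (0 < #|A|)%N by rewrite card_gt0.
have qC_lt_qm : (q ^ #|C| < q ^ m)%N by rewrite ltn_exp2l.
have qC_gt0 : (0 < q ^ #|C|)%N by rewrite expn_gt0 ltnW.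
have k_gt0 : (0 < (q - 1) * q ^ (#|A| + #|B| - 1))%N.
  by rewrite muln_gt0 subn_gt0 q_gt1 expn_gt0 ltnW.
have wt1_gt0 : (0 < wt1)%N by rewrite /wt1 muln_gt0 k_gt0 subn_gt0.
have wt1_lt_wt_half : (wt1 < wt_half)%N.
  rewrite /wt1 /wt_half; have -> : (m + #|A| + #|B| - 1 = (#|A| + #|B| - 1) + m)%N by lia.
  by rewrite expnD mulnA ltn_pmul2l // ltn_subrL qC_gt0 expn_gt0 ltnW.
rewrite -wt1_double -wt_half_double -(wt1_wt_half A_neq0 (ltnW C_lt_m)).
by move: wt1_gt0 wt1_lt_wt_half; clear; lia.
Qed.

Lemma subn_cardU_eq0 : (#|A :|: B| - #|B| == 0)%N = (A \subset B).
Proof.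
have /subset_leqif_card [B_le_AB eq_B_AB] := subsetUr A B.
have -> : (A \subset B) = (A :|: B \subset B) by rewrite subUset subxx andbT.
by rewrite subn_eq0 -eq_B_AB eqn_leq B_le_AB.
Qed.

Lemma fr_positivity : A != set0 -> (#|C| < m)%N ->
  [/\ (0 < fr2)%N, (0 < fr4)%N, (fr1 == 0)%N = (A \subset B) & (fr3 == 0)%N = (A \subset B)].
Proof.
move=> A_neq0 C_lt_m; have q_gt1 := card_gt1_finField F.
have A_gt0 : (0 < #|A|)%N by rewrite card_gt0.
have Y_gt1 : (1 < q ^ (m - #|C|))%N by rewrite -{1}(expn0 q) ltn_exp2l // subn_gt0.
have X_eq1 : (q ^ (#|A :|: B| - #|B|) - 1 == 0)%N = (A \subset B).
  by rewrite subn_eq0 -{1}(expn0 q) leq_exp2l // leqn0 subn_cardU_eq0.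
split; last 2 first.
- by rewrite /fr1 muln_eq0 X_eq1.
- by rewrite /fr3 !muln_eq0 X_eq1 subn_eq0 leqNgt Y_gt1 orbF.
- have two_le : (2 * q ^ (m - #|C| + #|A :|: B| - #|B|) <= q ^ (m + #|A| + #|A :|: B|))%N.
    apply: (@leq_trans (q * q ^ (m - #|C| + #|A :|: B| - #|B|))).
      by rewrite leq_mul2r q_gt1 orbT.
    by rewrite -expnS leq_exp2l //; lia.
  by rewrite /fr2 subn_gt0; apply: leq_ltn_trans two_le _; rewrite -addn1 leq_add2l; apply: ltnW.
- by rewrite /fr4 subn_gt0.
Qed.
End DefiningSet.

Local Close Scope ring_scope.

Theorem mainTheorem1 (F : finFieldType) (m : nat) (A B C : {set 'I_m}) :
  let q := #|F| in
  let a := #|A| in let b := #|B| in let c := #|C| in let ab := #|A :|: B| in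
  let D := S1 F A B C in
  let Cd := code D in
  let eps := if A \subset B then 2 else 1 in
  let W1 := ((q - 1) * q ^ (a + b - 1) * (q ^ m - q ^ c))%N in
  let W2 := (2 * (q - 1) * q ^ (a + b - 1) * (q ^ m - q ^ c))%N in
  let W3 := ((q - 1) * q ^ (a + b - 1) * (2 * q ^ m - q ^ c))%N in
  let W4 := (2 * (q - 1) * q ^ (m + a + b - 1))%N in
  let f1 := (2 * (q ^ (ab - b) - 1))%N in
  let f2 := (q ^ (m + a + ab) + q ^ (m - c) - 2 * q ^ (m - c + ab - b))%N in
  let f3 := (2 * (q ^ (ab - b) - 1) * (q ^ (m - c) - 1))%N in
  let f4 := (q ^ (m - c) - 1)%N in
  (2 <= m)%N -> A != set0 -> B != set0 -> C != set0 -> (c < m)%N ->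
  [/\ is_linear_code D Cd,
      #|D| = (q ^ (a + b) * (q ^ m - q ^ c))%N,
      #|Cd| = (q ^ (m + a + ab))%N,
      min_lee D Cd (eps * W1)%N &
      ((forall w : nat, freq D Cd w =
         ((w == 0%N) + (w == W1) * f1 + (w == W2) * f2
          + (w == W3) * f3 + (w == W4) * f4)%N) /\
       num_weights D Cd = (if A \subset B then 2 else 4)%N)].
Proof.
move=> q a b c ab D Cd eps W1 W2 W3 W4 f1 f2 f3 f4 _ A_neq0 _ _ C_lt_m.
have freqE w := freq_S1 F B w A_neq0 C_lt_m.
have /andP[W_lo W_hi] := wt_increasing F B A_neq0 C_lt_m.
have [f2_gt0 f4_gt0 f1_eq0 f3_eq0] := fr_positivity F B A_neq0 C_lt_m.
have [min_W num_W] := weight_profile (@lee_code_eq0 F m D) freqE W_lo W_hi f2_gt0 f4_gt0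
                                     (etrans f1_eq0 (esym f3_eq0)).
rewrite f1_eq0 in min_W num_W.
split; [exact: code_is_linear | exact: card_S1 | exact: card_code_S1 | | by []].
rewrite /eps /W1; case: (A \subset B) min_W; rewrite ?mul1n //.
by rewrite -(wt1_double F A B C) addnn -mul2n.
Qed.
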